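(* Let $d\in\mathbb{N}$, $\mathbf{n},\mathbf{m}\in\mathbb{N}^d$ with $\mathbf{m}\ge\mathbf{n}$, and $\mathbf{0}\le\mathbf{w}\le\mathbf{n}-\mathbf{1}$. Let $\mathbf{x}_*\in\mathbb{C}^{\mathbf{n}}$ with $\operatorname{Im}(x_{*,\mathbf{w}})=0$ and set $\mathbf{y}=|\mathcal{F}\{\mathbf{x}_*\}|^2$ (so $f_{LS}(\mathbf{x}_*;\mathbf{y})=0$). For $\boldsymbol{\epsilon}\in\mathbb{C}^{\mathbf{n}}$ put $\boldsymbol{\mathcal{E}}=\mathcal{F}\{\boldsymbol{\epsilon}\}$, $\mathbf{X}_*=\mathcal{F}\{\mathbf{x}_*\}$, $\mathbf{R}=\operatorname{Re}(\boldsymbol{\mathcal{E}}\odot\overline{\mathbf{X}_*})\in\mathbb{R}^{\mathbf{m}}$, the Lyapunov candidate $V(\boldsymbol{\epsilon})=\tfrac12\|\boldsymbol{\epsilon}\|_2^2$, and $$\dot V(\boldsymbol{\epsilon})=\operatorname{Re}\bigl\langle \nabla V(\boldsymbol{\epsilon}),-\nabla f_{reg}(\mathbf{x}_*+\boldsymbol{\epsilon};\mathbf{y},1,\mathbf{w})\bigr\rangle=-\operatorname{Re}\bigl(\boldsymbol{\epsilon}^\dagger\,\nabla f_{reg}(\mathbf{x}_*+\boldsymbol{\epsilon};\mathbf{y},1,\mathbf{w})\bigr).$$ Then: (1) $V(\boldsymbol{\epsilon})\ge0$ for all $\boldsymbol{\epsilon}$, and (2) $V(\boldsymbol{\epsilon})=0$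 if and only if $\boldsymbol{\epsilon}=\mathbf{0}$; (3) for every $\boldsymbol{\epsilon}$ with $g(\boldsymbol{\epsilon}):=\|\boldsymbol{\mathcal{E}}\|_4^4-\sum_{\mathbf{k}}|\mathcal{E}_{\mathbf{k}}|^2|R_{\mathbf{k}}|<0$, one has $\dot V(\boldsymbol{\epsilon})<0$; (4) for any constants $0<\delta<1$ and $\alpha>0$, every $\boldsymbol{\epsilon}$ satisfying $\|\boldsymbol{\mathcal{E}}\|_4^4<\delta\sum_{\mathbf{k}}|\mathcal{E}_{\mathbf{k}}|^2|R_{\mathbf{k}}|$ and $\|\mathbf{R}\|_2^2>\alpha\|\boldsymbol{\epsilon}\|_2^2$ satisfies $$\dot V(\boldsymbol{\epsilon})\le-\frac{(1-\delta)(7+\delta)}{4}\,\alpha\,V(\boldsymbol{\epsilon}).$$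
   Context: Multi-index notation: $\mathbb{C}^{\mathbf{n}}=\mathbb{C}^{n_1\times\cdots\times n_d}$, inequalities between multi-indices componentwise, $M=\prod_i m_i$. $\mathcal{F}:\mathbb{C}^{\mathbf{n}}\to\mathbb{C}^{\mathbf{m}}$, $\mathcal{F}\{\mathbf{x}\}_{\mathbf{k}}=M^{-1/2}\sum_{\mathbf{0}\le\mathbf{i}\le\mathbf{n}-\mathbf{1}}x_{\mathbf{i}}e^{-2\pi j\sum_lk_li_l/m_l}$ ($\mathbf{0}\le\mathbf{k}<\mathbf{m}$, $j^2=-1$). Operations $|\cdot|$, $\overline{\cdot}$, $\operatorname{Re}$ are entrywise; $\odot$ is the entrywise product. $f_{LS}(\mathbf{x};\mathbf{y})=\tfrac14\||\mathcal{F}\{\mathbf{x}\}|^2-\mathbf{y}\|_2^2$, $f_{reg}(\mathbf{x};\mathbf{y},\lambda,\mathbf{w})=f_{LS}(\mathbf{x};\mathbf{y})+\tfrac\lambda2(\operatorname{Im}x_{\mathbf{w}})^2$. Gradients are real gradients under $\mathbb{C}^{\mathbf{n}}\cong\mathbb{R}^{2N}$ written as complex vectors, $\nabla f=\partial f/\partial\operatorname{Re}\mathbf{x}+j\,\partial f/\partial\operatorname{Im}\mathbf{x}$; thus $\nabla V(\boldsymbol{\epsilon})=\boldsymbol{\epsilon}$ and $\nabla f_{LS}(\mathbf{x})=\mathcal{F}^\dagger\{(|\mathcal{F}\{\mathbf{x}\}|^2-\mathbf{y})\odot\mathcal{F}\{\mathbf{x}\}\}$. *)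

From HB Require Import structures.
From mathcomp Require Import all_boot all_order all_algebra.
From mathcomp Require Import complex.
From mathcomp Require Import reals trigo.


Import Order.TTheory GRing.Theory Num.Theory.
Local Open Scope ring_scope.
Local Open Scope complex_scope.

Section PhaseRetrieval.
Context {R : realType} {d : nat}.

Definition idx (n : 'I_d -> nat) := {dffun forall l : 'I_d, 'I_(n l)}.

Definition arr (n : 'I_d -> nat) := idx n -> R[i].

Definition abs2 (z : R[i]) : R := complex.Re z ^+ 2 + complex.Im z ^+ 2.

Definition expj (t : R) : R[i] := Complex (cos t) (sin t).

Definition nrm (m : 'I_d -> nat) : R := (Num.sqrt (\prod_(l < d) (m l)%:R))^-1.

Definition phase {n m : 'I_d -> nat} (k : idx m) (i : idx n) : R :=
  \sum_(l < d) ((k l : nat) * (i l : nat))%:R / (m l)%:R.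

(* F : C^n -> C^m (zero-padded multidimensional DFT) *)
Definition DFT {n : 'I_d -> nat} (m : 'I_d -> nat) (x : arr n) : arr m := fun k =>
  (nrm m)%:C * \sum_(i : idx n) x i * expj (- (2 * pi * phase k i)).

Definition DFTadj (n : 'I_d -> nat) {m : 'I_d -> nat} (Y : arr m) : arr n := fun i =>
  (nrm m)%:C * \sum_(k : idx m) Y k * expj (2 * pi * phase k i).

Definition fLS {n m : 'I_d -> nat} (x : arr n) (y : idx m -> R) : R :=
  4^-1 * \sum_(k : idx m) (abs2 (DFT m x k) - y k) ^+ 2.

Definition freg {n m : 'I_d -> nat} (x : arr n) (y : idx m -> R) (lam : R)
  (w : idx n) : R := fLS x y + lam / 2 * (complex.Im (x w)) ^+ 2.

(* Real gradients (d/dRe + j d/dIm), written as complex arrays. *)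
Definition gradLS {n m : 'I_d -> nat} (x : arr n) (y : idx m -> R) : arr n :=
  DFTadj n (fun k => (abs2 (DFT m x k) - y k)%:C * DFT m x k).

Definition gradreg {n m : 'I_d -> nat} (x : arr n) (y : idx m -> R) (lam : R)
  (w : idx n) : arr n := fun i =>
  gradLS x y i + (if i == w then Complex 0 (lam * complex.Im (x w)) else 0).

Definition Vlyap {n : 'I_d -> nat} (eps : arr n) : R :=
  2^-1 * \sum_(i : idx n) abs2 (eps i).

Definition Vdot {n m : 'I_d -> nat} (xs : arr n) (y : idx m -> R) (w : idx n)
  (eps : arr n) : R :=
  - complex.Re (\sum_(i : idx n) conjc (eps i) * gradreg (fun j => xs j + eps j) y 1 w i).

End PhaseRetrieval.

Arguments arr R {d} n.

From HB Require Import structures.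
From mathcomp Require Import all_boot all_order all_algebra.
From mathcomp Require Import complex.
From mathcomp Require Import reals trigo.
From mathcomp Require Import ring lra.
From Stdlib Require Import FunctionalExtensionality.
Import Order.TTheory GRing.Theory Num.Theory.
Local Open Scope ring_scope.
Local Open Scope complex_scope.

(* Writing E = F eps, X = F x_* and, per frequency, r = Re (E conj X) and
   e = |E|^2, the adjoint identity turns Vdot into
     - (sum_k (2 r^2 + 3 r e + e^2) + (Im eps_w)^2),
   because the residual |X + E|^2 - |X|^2 equals 2 r + e.  With
   A = ||r||^2, B = ||e||^2 and C = sum e |r| this is at most -(2A + B - 3C),
   and Cauchy-Schwarz gives C^2 <= A B.  If B < delta C then C < delta A, so
   A (2A + B - 3C) >= (A - C)(2A - C) >= (1 - delta)(2 - delta) A^2; the case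
   delta = 1 is part (3), and A > alpha ||eps||^2 converts the bound into a
   multiple of V. *)

Section ComplexSums.
Context {R : realType}.

Lemma Re_sum (I : finType) (f : I -> R[i]) :
  complex.Re (\sum_(i : I) f i) = \sum_(i : I) complex.Re (f i).
Proof. exact: (raddf_sum (@complex.Re R : Rcomplex R -> R)). Qed.

Lemma abs2_ge0 (z : R[i]) : 0 <= abs2 z.
Proof. by rewrite /abs2 addr_ge0 ?sqr_ge0. Qed.

Lemma abs2_eq0 (z : R[i]) : abs2 z = 0 -> z = 0.
Proof.
case: z => a b; rewrite /abs2 /= => /eqP.
by rewrite paddr_eq0 ?sqr_ge0 // !sqrf_eq0 => /andP[/eqP-> /eqP->].
Qed.

Lemma conjc_expj (t : R) : conjc (expj t) = expj (- t).
Proof. by rewrite /expj /= cosN sinN. Qed.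

Lemma Re_residual_mul_conj (X E : R[i]) :
  let r := complex.Re (E * conjc X) in
  complex.Re ((abs2 (X + E) - abs2 X)%:C * (X + E) * conjc E) =
  2 * r ^+ 2 + 3 * r * abs2 E + abs2 E ^+ 2.
Proof. by case: X => a b; case: E => c e; rewrite /abs2 /=; ring. Qed.

End ComplexSums.

Section Fourier.
Context {R : realType} {d : nat} {n : 'I_d -> nat} (m : 'I_d -> nat).

Lemma DFT_add (x e : arr R n) (k : idx m) :
  DFT m (fun j => x j + e j) k = DFT m x k + DFT m e k.
Proof.
rewrite /DFT -mulrDr -big_split; congr (_ * _).
by apply: eq_bigr => i _; rewrite mulrDl.
Qed.

Lemma DFTadj_adjoint (e : arr R n) (Z : arr R m) :
  \sum_(i : idx n) conjc (e i) * DFTadj n Z i =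
  \sum_(k : idx m) Z k * conjc (DFT m e k).
Proof.
rewrite /DFTadj /DFT.
under eq_bigr do rewrite mulr_sumr mulr_sumr.
under [RHS]eq_bigr do rewrite rmorphM rmorph_sum mulr_sumr mulr_sumr.
rewrite exchange_big; apply: eq_bigr => k _; apply: eq_bigr => i _.
rewrite rmorphM /= cosN sinN opprK /expj.
case: (e i) (Z k) => a b [c f]; simpc; congr Complex; ring.
Qed.

Definition fourier_cross (xs eps : arr R n) (k : idx m) : R :=
  complex.Re (DFT m eps k * conjc (DFT m xs k)).

Definition fourier_energy (eps : arr R n) (k : idx m) : R := abs2 (DFT m eps k).

Lemma Vdot_expand (xs eps : arr R n) (w : idx n) :
  complex.Im (xs w) = 0 ->
  Vdot xs (fun k => abs2 (DFT m xs k)) w eps =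
  - (\sum_(k : idx m) (2 * fourier_cross xs eps k ^+ 2
        + 3 * fourier_cross xs eps k * fourier_energy eps k
        + fourier_energy eps k ^+ 2)
     + complex.Im (eps w) ^+ 2).
Proof.
move=> xs_w_real; rewrite /Vdot /gradreg.
under eq_bigr do rewrite mulrDr.
rewrite big_split /= raddfD /= [\sum_i _ * (if _ then _ else _)](bigD1 w) //=.
rewrite eqxx [\sum_(i | i != w) _]big1 ?addr0; last first.
  by move=> i iw; rewrite (negbTE iw) mulr0.
rewrite /gradLS DFTadj_adjoint Re_sum.
congr (- (_ + _)).
  by apply: eq_bigr => k _; rewrite DFT_add Re_residual_mul_conj.
rewrite raddfD /= xs_w_real add0r mul1r; case: (eps w) => a b /=.
by rewrite mulr0 sub0r mulNr opprK expr2.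
Qed.

Lemma Vdot_le_gap (xs eps : arr R n) (w : idx n) :
  complex.Im (xs w) = 0 ->
  Vdot xs (fun k => abs2 (DFT m xs k)) w eps <=
  - (2 * \sum_(k : idx m) fourier_cross xs eps k ^+ 2
     + \sum_(k : idx m) fourier_energy eps k ^+ 2
     - 3 * \sum_(k : idx m) fourier_energy eps k * `|fourier_cross xs eps k|).
Proof.
move=> xs_w_real; rewrite Vdot_expand // lerN2.
rewrite -[X in X <= _]addr0 lerD ?sqr_ge0 //.
rewrite !mulr_sumr -sumrN -!big_split /=; apply: ler_sum => k _.
set r := fourier_cross xs eps k; set e := fourier_energy eps k.
have : - `|r| <= r by rewrite lerNl -normrN ler_norm.
have : 0 <= e by exact: abs2_ge0.
nra.
Qed.

End Fourier.

Section RealInequalities.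
Context {R : realFieldType}.

Lemma sum_mul_sqr_le (I : finType) (u v : I -> R) :
  (\sum_(i : I) u i * v i) ^+ 2 <= (\sum_(i : I) u i ^+ 2) * (\sum_(i : I) v i ^+ 2).
Proof.
set A := \sum_i u i ^+ 2; set B := \sum_i v i ^+ 2; set C := \sum_i u i * v i.
have A_ge0 : 0 <= A by apply: sumr_ge0 => i _; exact: sqr_ge0.
have [A0 | A_neq0] := eqVneq A 0.
  have u0 i : u i = 0.
    apply/eqP; rewrite -sqrf_eq0; apply/eqP.
    by apply: (psumr_eq0P _ A0) => // j _; exact: sqr_ge0.
  rewrite /C big1 => [|i _]; last by rewrite u0 mul0r.
  by rewrite A0 expr2 !mul0r.
(* The discriminant argument: the square of C u - A v is nonnegative. *)
have : 0 <= \sum_i (C * u i - A * v i) ^+ 2 by apply: sumr_ge0 => i _; exact: sqr_ge0.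
have -> : \sum_i (C * u i - A * v i) ^+ 2 = A * (A * B - C ^+ 2).
  rewrite (eq_bigr (fun i => C ^+ 2 * u i ^+ 2 - 2 * C * A * (u i * v i)
                             + A ^+ 2 * v i ^+ 2)) => [|i _]; last by ring.
  by rewrite !big_split /= -!mulr_sumr sumrN -mulr_sumr -/A -/B -/C; ring.
have A_gt0 : 0 < A by rewrite lt_def A_neq0.
by rewrite pmulr_rge0 // subr_ge0.
Qed.

Lemma sum_mul_norm_sqr_le (I : finType) (u v : I -> R) :
  (\sum_(i : I) u i * `|v i|) ^+ 2 <= (\sum_(i : I) v i ^+ 2) * (\sum_(i : I) u i ^+ 2).
Proof.
rewrite mulrC [\sum_i v i ^+ 2](eq_bigr (fun i => `|v i| ^+ 2)) => [|i _];
  last by rewrite real_normK ?num_real.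
exact: sum_mul_sqr_le.
Qed.

Lemma gap_gt0 (A B C : R) :
  0 <= B -> C ^+ 2 <= A * B -> B < C -> 0 < 2 * A + B - 3 * C.
Proof.
move=> B_ge0 CS BC.
have C_gt0 : 0 < C by exact: le_lt_trans BC.
have A_gt0 : 0 < A by nra.
have CA : C < A by nra.
(* A (2A + B - 3C) >= 2A^2 + C^2 - 3AC = (A - C)(2A - C) > 0 *)
nra.
Qed.

Lemma gap_ge (delta A B C : R) : 0 < delta < 1 ->
  0 <= B -> C ^+ 2 <= A * B -> B < delta * C ->
  (1 - delta) * (2 - delta) * A <= 2 * A + B - 3 * C.
Proof.
move=> /andP[delta_gt0 delta_lt1] B_ge0 CS BC.
have C_gt0 : 0 < C by nra.
have A_gt0 : 0 < A by nra.
have CA : C < delta * A by nra.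
have : 0 <= (delta * A - C) * (3 * A - C - delta * A) by apply: mulr_ge0; nra.
(* A (2A + B - 3C) >= (A - C)(2A - C) >= (1 - delta)(2 - delta) A^2 *)
nra.
Qed.

Lemma decay_rate_le (delta alpha N A : R) : 0 < delta < 1 -> 0 < alpha ->
  0 <= N -> alpha * N < A ->
  (1 - delta) * (7 + delta) / 4 * alpha * (2^-1 * N) <= (1 - delta) * (2 - delta) * A.
Proof.
move=> /andP[delta_gt0 delta_lt1] alpha_gt0 N_ge0 NA.
have -> : (1 - delta) * (7 + delta) / 4 * alpha * (2^-1 * N) =
          (1 - delta) * ((7 + delta) / 8) * (alpha * N) by field.
have rate_le : (7 + delta) / 8 <= 2 - delta by rewrite ler_pdivrMr //; lra.
apply: le_trans (_ : (1 - delta) * (2 - delta) * (alpha * N) <= _).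
  apply: ler_wpM2r; first by rewrite mulr_ge0 // ltW.
  by apply: ler_wpM2l; first lra.
by apply: ler_wpM2l; [nra | exact: ltW].
Qed.

End RealInequalities.

Section Lyapunov.
Context {R : realType} {d : nat} {n : 'I_d -> nat}.

Lemma Vlyap_ge0 (eps : arr R n) : 0 <= Vlyap eps.
Proof. by rewrite /Vlyap mulr_ge0 ?invr_ge0 ?ler0n ?sumr_ge0 // => i _; exact: abs2_ge0. Qed.

Lemma Vlyap_eq0 (eps : arr R n) : Vlyap eps = 0 <-> eps = (fun _ => 0).
Proof.
split=> [|->]; last first.
  by rewrite /Vlyap big1 ?mulr0 // => i _; rewrite /abs2 /= expr0n addr0.
rewrite /Vlyap => /eqP; rewrite mulf_eq0 invr_eq0 pnatr_eq0 /= => /eqP eps_norm0.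
apply: functional_extensionality => i; apply: abs2_eq0.
by apply: (psumr_eq0P _ eps_norm0) => // j _; exact: abs2_ge0.
Qed.

End Lyapunov.

Theorem theorem3p2 (R : realType) (d : nat) (n m : 'I_d -> nat)
  (w : idx n) (xs : arr R n) :
  (forall l, n l <= m l)%N ->
  complex.Im (xs w) = 0 ->
  let y : idx m -> R := fun k => abs2 (DFT m xs k) in
  let E := fun eps : arr R n => DFT m eps in
  let Rv := fun (eps : arr R n) (k : idx m) =>
              complex.Re (E eps k * conjc (DFT m xs k)) in
  let E44 := fun eps : arr R n => \sum_(k : idx m) abs2 (E eps k) ^+ 2 in
  let S := fun eps : arr R n =>
              \sum_(k : idx m) abs2 (E eps k) * `|Rv eps k| in
  [/\ (forall eps : arr R n, 0 <= Vlyap eps),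
      (forall eps : arr R n, Vlyap eps = 0 <-> eps = (fun _ => 0)),
      (forall eps : arr R n, E44 eps - S eps < 0 -> Vdot xs y w eps < 0) &
      (forall delta alpha : R, 0 < delta < 1 -> 0 < alpha ->
         forall eps : arr R n,
           E44 eps < delta * S eps ->
           \sum_(k : idx m) Rv eps k ^+ 2 > alpha * \sum_(i : idx n) abs2 (eps i) ->
           Vdot xs y w eps <=
             - ((1 - delta) * (7 + delta) / 4) * alpha * Vlyap eps)].
Proof.
move=> _ xs_w_real y E Rv E44 S.
have Vdot_le eps : Vdot xs y w eps <= - (2 * \sum_k Rv eps k ^+ 2 + E44 eps - 3 * S eps).
  exact: Vdot_le_gap.
have E44_ge0 eps : 0 <= E44 eps by apply: sumr_ge0 => k _; exact: sqr_ge0.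
have S_sqr_le eps : S eps ^+ 2 <= (\sum_k Rv eps k ^+ 2) * E44 eps.
  exact: sum_mul_norm_sqr_le.
split=> [|||delta alpha delta01 alpha_gt0] eps.
- exact: Vlyap_ge0.
- exact: Vlyap_eq0.
- rewrite subr_lt0 => E44_lt_S; apply: le_lt_trans (Vdot_le eps) _.
  by rewrite oppr_lt0 gap_gt0.
- move=> E44_lt_S Rv_gt; apply: le_trans (Vdot_le eps) _.
  have := gap_ge _ _ _ _ delta01 (E44_ge0 eps) (S_sqr_le eps) E44_lt_S.
  rewrite !mulNr lerN2; apply: le_trans.
  by rewrite decay_rate_le // sumr_ge0 // => i _; exact: abs2_ge0.
Qed.
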